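(* Let $Z\in\mathcal{H}_3$ be the period matrix of a simple genus $3$ hyperelliptic Jacobian such that $\vartheta[\delta](Z)=0$ for exactly one even characteristic class $\delta\in\frac12\mathbb{Z}^6/\mathbb{Z}^6$, and $\delta\neq 0$. Then there is $\gamma\in\Gamma_{1,2}$ such that $Z$ satisfies the Vanishing Criterion for the map $\eta=\gamma\tilde\eta$, i.e. for every $S\subseteq B$ with $\#S$ even, $\vartheta[\eta_S](Z)=0$ if and only if $\#(S\circ U_\eta)\neq 4$. Furthermore, this $\gamma$ can be taken to be any $\gamma\in\Gamma_{1,2}$ such that $\gamma\,(\tfrac12,\tfrac12,\tfrac12,\tfrac12,0,\tfrac12)^T\equiv\delta \pmod{\mathbb{Z}^6}$.
   Context: $\mathcal{H}_g$ is the set of complex symmetric $g\times g$ matrices with positive definite imaginary part. For $x\in\mathbb{C}^{6}$ write $x=(x_1,x_2)$ with $x_1$ the first $3$ and $x_2$ the last $3$ entries. Let $B=\{1,2,\dots,7,\infty\}$, $S_1\circ S_2=(S_1\cup S_2)\setminus(S_1\cap S_2)$, $S^c=B\setminus S$. For $\xi,\zeta\in\frac12\mathbb{Z}^{6}$: $e_*(\xi)=\exp(4\pi i\,\xi_1^T\xi_2)$ and $e_2(\xi,\zeta)=\exp(4\pi i\,\xi^TJ\zeta)$ with $J=\begin{pmatrix}0&\mathbb{1}_3\\-\mathbb{1}_3&0\end{pmatrix}$. $\Xi_3$ is the set of maps $\eta$ from subsets of $B$ to $\frac12\mathbb{Z}^6$ such that: (i) $\eta(\{\infty\})=0$; (ii)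 $\eta(S)=\sum_{i\in S}\eta(\{i\})$; (iii) $\eta(S)\equiv\eta(S^c)$ mod $\mathbb{Z}^6$ and the induced map from the group of even-cardinality subsets of $B$ modulo $S\sim S^c$ (under $\circ$) to $\frac12\mathbb{Z}^6/\mathbb{Z}^6$ is a group isomorphism; (iv) for $\#S_1,\#S_2$ even, $e_2(\eta(S_1),\eta(S_2))=(-1)^{\#(S_1\cap S_2)}$; (v) there is $U_\eta\subseteq B$ with $\#U_\eta\equiv 4\pmod 4$ such that for all $S$ of even cardinality $e_*(\eta(S))=(-1)^{(4-\#(S\circ U_\eta))/2}$ (one has $U_\eta=\{i\neq\infty: e_*(\eta(\{i\}))=-1\}\cup\{\infty\}$). Write $\eta_S=\eta(S)$, $\eta_i=\eta(\{i\})$. Theta constants: for $\xi\in\frac12\mathbb{Z}^6$, $\vartheta[\xi](Z)=\exp(\pi i\xi_1^TZ\xi_1+2\pi i\xi_1^T\xi_2)\sum_{n\in\mathbb{Z}^3}\exp(\pi i n^TZn+2\pi i n^T(\xi_2+Z\xi_1))$; $\xi$ is even if $e_*(\xi)=1$; vanishing of $\vartheta[\xi](Z)$ depends only on $\xi$ mod $\mathbb{Z}^6$. $\mathrm{Sp}_6(\mathbb{Z})$ is the group of integer $6\times6$ matrices preserving the form $x_1^Ty_2-x_2^Ty_1$; it acts on maps $\eta$ by $(\gamma\eta)(S)=\gamma\,\eta(S)$ (matrix times column vector), considered modulo $\mathbb{Z}^6$. With $Q(x)=x_1^Tx_2$, $\Gamma_{1,2}=\{\gamma\in\mathrm{Sp}_6(\mathbb{Z}):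 Q(\gamma x)\equiv Q(x)\pmod 2\}$. Mumford's map $\tilde\eta\in\Xi_3$ is determined (mod $\mathbb{Z}^6$) by $\tilde\eta_1=(\tfrac12,0,0,0,0,0)$, $\tilde\eta_2=(\tfrac12,0,0,\tfrac12,0,0)$, $\tilde\eta_3=(0,\tfrac12,0,\tfrac12,0,0)$, $\tilde\eta_4=(0,\tfrac12,0,\tfrac12,\tfrac12,0)$, $\tilde\eta_5=(0,0,\tfrac12,\tfrac12,\tfrac12,0)$, $\tilde\eta_6=(0,0,\tfrac12,\tfrac12,\tfrac12,\tfrac12)$, $\tilde\eta_7=(0,0,0,\tfrac12,\tfrac12,\tfrac12)$; it has $U_{\tilde\eta}=\{2,4,6,\infty\}$ and $\tilde\eta_{U_{\tilde\eta}}\equiv(\tfrac12,\tfrac12,\tfrac12,\tfrac12,0,\tfrac12)$. *)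

From Stdlib Require Import Reals ZArith Arith Lia ClassicalDescription.
From Coquelicot Require Import Coquelicot.

Open Scope R_scope.

Definition cexp (z : C) : C := (exp (fst z) * cos (snd z), exp (fst z) * sin (snd z)).

Definition cI : C := (0, 1).
Definition cPI : C := RtoC PI.

Fixpoint csum (n : nat) (f : nat -> C) : C :=
  match n with O => RtoC 0 | S k => Cplus (csum k f) (f k) end.

Fixpoint rsum (n : nat) (f : nat -> R) : R :=
  match n with O => 0 | S k => rsum k f + f k end.

Fixpoint zsum (n : nat) (f : nat -> Z) : Z :=
  match n with O => 0%Z | S k => (zsum k f + f k)%Z end.

(** A 3x3 complex matrix is Z : nat -> nat -> C (entries i,j < 3 used).
    Siegel upper half space H_3: symmetric with positive definite imaginary part. *)
Definition in_H3 (Zm : nat -> nat -> C) : Prop :=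
  (forall i j, (i < 3)%nat -> (j < 3)%nat -> Zm i j = Zm j i) /\
  (forall v : nat -> R, (exists i, (i < 3)%nat /\ v i <> 0) ->
     0 < rsum 3 (fun i => rsum 3 (fun j => v i * Im (Zm i j) * v j))).

(** Characteristics xi in (1/2) Z^6 are represented by their numerators
    a : nat -> Z (entries 0..5), i.e. xi_k = a k / 2.
    xi_1 = entries 0,1,2 ; xi_2 = entries 3,4,5. *)
Definition hchar := nat -> Z.
Definition half (a : hchar) (k : nat) : C := RtoC (IZR (a k) / 2).

Definition estar (a : hchar) : C :=
  cexp (Cmult (Cmult (RtoC 4) (Cmult cPI cI))
              (csum 3 (fun j => Cmult (half a j) (half a (j + 3)%nat)))).

Definition heven (a : hchar) : Prop := estar a = RtoC 1.

Definition hequiv (a b : hchar) : Prop :=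
  forall k, (k < 6)%nat -> Z.modulo (a k - b k) 2 = 0%Z.

Definition hzero : hchar := fun _ => 0%Z.

(** The sum over Z^3 is taken as the limit of the sums over the boxes [-N,N]^3. *)
Definition theta_prefactor (a : hchar) (Zm : nat -> nat -> C) : C :=
  cexp (Cplus
    (Cmult (Cmult cPI cI)
       (csum 3 (fun j => csum 3 (fun k => Cmult (Cmult (half a j) (Zm j k)) (half a k)))))
    (Cmult (Cmult (RtoC 2) (Cmult cPI cI))
       (csum 3 (fun j => Cmult (half a j) (half a (j + 3)%nat))))).

Definition theta_term (a : hchar) (Zm : nat -> nat -> C) (n : nat -> Z) : C :=
  let nC := fun j => RtoC (IZR (n j)) in
  cexp (Cplus
    (Cmult (Cmult cPI cI)
       (csum 3 (fun j => csum 3 (fun k => Cmult (Cmult (nC j) (Zm j k)) (nC k)))))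
    (Cmult (Cmult (RtoC 2) (Cmult cPI cI))
       (csum 3 (fun j => Cmult (nC j)
          (Cplus (half a (j + 3)%nat) (csum 3 (fun k => Cmult (Zm j k) (half a k)))))))).

Definition vec3 (x y z : Z) : nat -> Z :=
  fun j => match j with O => x | 1 => y | 2 => z | _ => 0%Z end.

Definition theta_box (a : hchar) (Zm : nat -> nat -> C) (N : nat) : C :=
  let c := fun k : nat => (Z.of_nat k - Z.of_nat N)%Z in
  csum (2 * N + 1) (fun k1 => csum (2 * N + 1) (fun k2 => csum (2 * N + 1) (fun k3 =>
    theta_term a Zm (vec3 (c k1) (c k2) (c k3))))).

Definition theta_value (a : hchar) (Zm : nat -> nat -> C) (v : C) : Prop :=
  exists l : C, filterlim (theta_box a Zm) eventually (locally l) /\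
                v = Cmult (theta_prefactor a Zm) l.

Definition theta_vanishes (a : hchar) (Zm : nat -> nat -> C) : Prop :=
  theta_value a Zm (RtoC 0).

Definition mv (g : nat -> nat -> Z) (x : nat -> Z) : nat -> Z :=
  fun i => zsum 6 (fun j => (g i j * x j)%Z).

Definition sform (x y : nat -> Z) : Z :=
  zsum 3 (fun i => (x i * y (i + 3)%nat - x (i + 3)%nat * y i)%Z).

Definition Sp6Z (g : nat -> nat -> Z) : Prop :=
  forall x y : nat -> Z, sform (mv g x) (mv g y) = sform x y.

Definition Qf (x : nat -> Z) : Z := zsum 3 (fun i => (x i * x (i + 3)%nat)%Z).

Definition Gamma12 (g : nat -> nat -> Z) : Prop :=
  Sp6Z g /\ forall x : nat -> Z, Z.modulo (Qf (mv g x) - Qf x) 2 = 0%Z.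

(** Subsets of B = {1,...,7,oo} as S : nat -> bool, index i-1 <-> element i
    (i = 1..7) and index 7 <-> oo; indices >= 8 are ignored. *)
Definition cardB (S : nat -> bool) : nat :=
  List.length (List.filter S (List.seq 0 8)).

Definition symdiff (S T : nat -> bool) : nat -> bool := fun i => xorb (S i) (T i).

Definition singletonB (i : nat) : nat -> bool := fun j => Nat.eqb i j.

(** Mumford's map (numerators): eta~_{i+1} for index i = 0..6; eta~_oo = 0. *)
Definition vec6 (a b c d e f : Z) : nat -> Z :=
  fun j => match j with O => a | 1 => b | 2 => c | 3 => d | 4 => e | 5 => f | _ => 0%Z end.

Definition eta_tilde_pt (i : nat) : nat -> Z :=
  match i with
  | O => vec6 1 0 0 0 0 0
  | 1 => vec6 1 0 0 1 0 0
  | 2 => vec6 0 1 0 1 0 0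
  | 3 => vec6 0 1 0 1 1 0
  | 4 => vec6 0 0 1 1 1 0
  | 5 => vec6 0 0 1 1 1 1
  | 6 => vec6 0 0 0 1 1 1
  | _ => vec6 0 0 0 0 0 0
  end.

Definition eta_tilde (S : nat -> bool) : hchar :=
  fun k => zsum 8 (fun i => if S i then eta_tilde_pt i k else 0%Z).

Definition geta (g : nat -> nat -> Z) (S : nat -> bool) : hchar := mv g (eta_tilde S).

Definition U_geta (g : nat -> nat -> Z) : nat -> bool := fun i =>
  if Nat.eqb i 7 then true
  else if Nat.ltb i 7 then
    (if excluded_middle_informative (estar (geta g (singletonB i)) = RtoC (-1))
     then true else false)
  else false.

Definition vanishing_criterion (Zm : nat -> nat -> C) (g : nat -> nat -> Z) : Prop :=
  forall S : nat -> bool, Nat.even (cardB S) = true ->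
    (theta_vanishes (geta g S) Zm <-> cardB (symdiff S (U_geta g)) <> 4%nat).

(** numerators of (1/2,1/2,1/2,1/2,0,1/2) = eta~_{U_{eta~}} *)
Definition vU : nat -> Z := vec6 1 1 1 1 0 1.

(* Theta constants of odd characteristic vanish: the summand is odd under the
   reflection [n |-> - n - xi_1] of [Z^3], and since the box sums converge
   absolutely (Gaussian decay), the sum over a box differs from the sum over the
   reflected box by a boundary term that tends to zero.  For even
   characteristics the hypothesis says that exactly the class [delta] vanishes.
   [Gamma_{1,2}] preserves parity and, being symplectic, also the relation of
   congruence modulo [Z^6] in both directions; hence [theta[gamma eta~_S]]
   vanishes iff [eta~_S] is odd or [eta~_S = eta~_U mod Z^6], and a check of
   the 256 subsets [S] shows that this happens iff [#(S o U) <> 4].  Finally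
   [Gamma_{1,2}] is transitive on nonzero even characteristics: a product of
   two transvections in odd vectors carries [eta~_U] to any of them. *)

From Stdlib Require Import Reals ZArith Lia Lra Psatz List FunctionalExtensionality ClassicalDescription.
From Coquelicot Require Import Coquelicot.
Import ListNotations.

Open Scope R_scope.

Lemma csum_ext n f g : (forall k, (k < n)%nat -> f k = g k) -> csum n f = csum n g.
Proof.
  induction n as [|n IH]; intros Hfg; simpl; [reflexivity|].
  rewrite IH by (intros; apply Hfg; lia). now rewrite Hfg by lia.
Qed.

Lemma csum_zero n f : (forall k, (k < n)%nat -> f k = RtoC 0) -> csum n f = RtoC 0.
Proof.
  induction n as [|n IH]; intros Hf; simpl; [reflexivity|].
  rewrite IH by (intros; apply Hf; lia). rewrite Hf by lia. apply Cplus_0_r.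
Qed.

Lemma csum_add_range m n f :
  csum (m + n) f = (csum m f + csum n (fun k => f (m + k)%nat))%C.
Proof.
  induction n as [|n IH].
  - simpl. now rewrite Nat.add_0_r, Cplus_0_r.
  - rewrite Nat.add_succ_r. simpl. now rewrite IH, Cplus_assoc.
Qed.

Lemma csum_rev n f : csum n f = csum n (fun k => f (n - 1 - k)%nat).
Proof.
  revert f; induction n as [|n IH]; intros f; [reflexivity|].
  change (S n) with (1 + n)%nat at 1. rewrite csum_add_range, IH. simpl.
  rewrite Cplus_0_l, Cplus_comm. replace (n - 0 - n)%nat with 0%nat by lia.
  f_equal. apply csum_ext. intros k Hk. f_equal. lia.
Qed.

Lemma csum_plus n f g : csum n (fun k => f k + g k)%C = (csum n f + csum n g)%C.
Proof.
  induction n as [|n IH]; simpl.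
  - now rewrite Cplus_0_l.
  - rewrite IH. apply injective_projections; simpl; ring.
Qed.

Lemma csum_opp n f : csum n (fun k => - f k)%C = (- csum n f)%C.
Proof.
  induction n as [|n IH]; simpl.
  - apply injective_projections; simpl; ring.
  - rewrite IH. apply injective_projections; simpl; ring.
Qed.

Lemma RtoC_rsum n f : RtoC (rsum n f) = csum n (fun k => RtoC (f k)).
Proof.
  induction n as [|n IH]; simpl; [reflexivity|].
  rewrite <- IH. apply injective_projections; simpl; ring.
Qed.

Lemma Cmod_csum n f : Cmod (csum n f) <= rsum n (fun k => Cmod (f k)).
Proof.
  induction n as [|n IH]; simpl.
  - rewrite Cmod_0. lra.
  - eapply Rle_trans; [apply Cmod_triangle|]. lra.
Qed.

Lemma rsum_le n f g : (forall k, (k < n)%nat -> f k <= g k) -> rsum n f <= rsum n g.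
Proof.
  induction n as [|n IH]; intros Hfg; simpl; [lra|].
  apply Rplus_le_compat; [apply IH; intros|]; apply Hfg; lia.
Qed.

Lemma rsum_minus n f g : rsum n (fun k => f k - g k) = rsum n f - rsum n g.
Proof. induction n as [|n IH]; simpl; lra. Qed.

Lemma rsum_scal n c f : rsum n (fun k => c * f k) = c * rsum n f.
Proof. induction n as [|n IH]; simpl; [ring|]. rewrite IH. ring. Qed.

Definition isum (l : Z) (L : nat) (f : Z -> C) : C :=
  csum L (fun k => f (l + Z.of_nat k)%Z).

Definition irsum (l : Z) (L : nat) (f : Z -> R) : R :=
  rsum L (fun k => f (l + Z.of_nat k)%Z).

Definition in_interval (l : Z) (L : nat) (z : Z) : bool :=
  andb (l <=? z)%Z (z <? l + Z.of_nat L)%Z.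

Definition subinterval (l' : Z) (L' : nat) (l : Z) (L : nat) : Prop :=
  (l <= l' /\ l' + Z.of_nat L' <= l + Z.of_nat L)%Z.

Lemma isum_ext l L f g : (forall z, f z = g z) -> isum l L f = isum l L g.
Proof. intros Hfg. now replace f with g by (symmetry; apply functional_extensionality, Hfg). Qed.

Lemma isum_indicator l L l' L' f : subinterval l' L' l L ->
  isum l L (fun z => if in_interval l' L' z then f z else 0%R) = isum l' L' f.
Proof.
  intros [Hlo Hhi]. unfold isum.
  set (d := Z.to_nat (l' - l)).
  replace L with (d + (L' + (L - d - L')))%nat by lia.
  rewrite !csum_add_range, (csum_zero d), (csum_zero (L - d - L')), Cplus_0_l, Cplus_0_r.
  - apply csum_ext; intros k Hk. unfold in_interval.
    replace (l + Z.of_nat (d + k))%Z with (l' + Z.of_nat k)%Z by lia.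
    now rewrite (proj2 (Z.leb_le _ _)), (proj2 (Z.ltb_lt _ _)) by lia.
  - intros k Hk. unfold in_interval. now rewrite (proj2 (Z.ltb_ge _ _)), Bool.andb_false_r by lia.
  - intros k Hk. unfold in_interval. now rewrite (proj2 (Z.leb_gt _ _)) by lia.
Qed.

Lemma isum_reflect l L c f :
  isum l L (fun z => f (- z - c)%Z) = isum (- (l + Z.of_nat L - 1) - c) L f.
Proof. unfold isum. rewrite csum_rev. apply csum_ext. intros k Hk. f_equal. lia. Qed.

Lemma RtoC_irsum l L f : RtoC (irsum l L f) = isum l L (fun z => RtoC (f z)).
Proof. apply RtoC_rsum. Qed.

Lemma Cmod_isum l L f : Cmod (isum l L f) <= irsum l L (fun z => Cmod (f z)).
Proof. apply Cmod_csum. Qed.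

Lemma irsum_le l L f g : (forall z, f z <= g z) -> irsum l L f <= irsum l L g.
Proof. intros Hfg. apply rsum_le. auto. Qed.

Record box := Box { lo1 : Z; lo2 : Z; lo3 : Z; side : nat }.

Definition box_sum (b : box) (F : Z -> Z -> Z -> C) : C :=
  isum (lo1 b) (side b) (fun x => isum (lo2 b) (side b) (fun y =>
    isum (lo3 b) (side b) (F x y))).

Definition box_rsum (b : box) (F : Z -> Z -> Z -> R) : R :=
  irsum (lo1 b) (side b) (fun x => irsum (lo2 b) (side b) (fun y =>
    irsum (lo3 b) (side b) (F x y))).

Definition in_box (b : box) (x y z : Z) : bool :=
  in_interval (lo1 b) (side b) x && in_interval (lo2 b) (side b) y
  && in_interval (lo3 b) (side b) z.

Definition sub_box (b b' : box) : Prop :=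
  subinterval (lo1 b) (side b) (lo1 b') (side b') /\
  subinterval (lo2 b) (side b) (lo2 b') (side b') /\
  subinterval (lo3 b) (side b) (lo3 b') (side b').

Lemma box_sum_ext b F G : (forall x y z, F x y z = G x y z) -> box_sum b F = box_sum b G.
Proof. intros HFG. unfold box_sum. do 3 (apply isum_ext; intro). apply HFG. Qed.

Lemma box_rsum_le b F G : (forall x y z, F x y z <= G x y z) -> box_rsum b F <= box_rsum b G.
Proof. intros HFG. do 3 (apply irsum_le; intro). apply HFG. Qed.

Lemma box_sum_opp b F : box_sum b (fun x y z => - F x y z)%C = (- box_sum b F)%C.
Proof.
  unfold box_sum, isum. rewrite <- csum_opp. apply csum_ext; intros.
  rewrite <- csum_opp. apply csum_ext; intros. apply csum_opp.
Qed.

Lemma box_sum_minus b F G :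
  (box_sum b F - box_sum b G)%C = box_sum b (fun x y z => F x y z - G x y z)%C.
Proof.
  unfold box_sum, isum, Cminus. rewrite <- csum_opp, <- csum_plus. apply csum_ext; intros.
  rewrite <- csum_opp, <- csum_plus. apply csum_ext; intros.
  now rewrite <- csum_opp, <- csum_plus.
Qed.

Lemma box_rsum_minus b F G :
  box_rsum b (fun x y z => F x y z - G x y z) = box_rsum b F - box_rsum b G.
Proof.
  unfold box_rsum, irsum. rewrite <- rsum_minus. apply f_equal, functional_extensionality; intro.
  rewrite <- rsum_minus. apply f_equal, functional_extensionality; intro.
  apply rsum_minus.
Qed.

Lemma Cmod_box_sum b F : Cmod (box_sum b F) <= box_rsum b (fun x y z => Cmod (F x y z)).
Proof.
  eapply Rle_trans; [apply Cmod_isum|]. apply irsum_le; intro.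
  eapply Rle_trans; [apply Cmod_isum|]. apply irsum_le; intro.
  apply Cmod_isum.
Qed.

Lemma RtoC_box_rsum b F : RtoC (box_rsum b F) = box_sum b (fun x y z => RtoC (F x y z)).
Proof.
  unfold box_rsum. rewrite RtoC_irsum. apply isum_ext; intro.
  rewrite RtoC_irsum. apply isum_ext; intro. apply RtoC_irsum.
Qed.

Lemma box_sum_indicator b B F : sub_box b B ->
  box_sum B (fun x y z => if in_box b x y z then F x y z else 0%R) = box_sum b F.
Proof.
  intros (H1 & H2 & H3). unfold box_sum, in_box.
  rewrite <- (isum_indicator _ _ _ _ _ H1). apply isum_ext; intro x.
  destruct (in_interval (lo1 b) (side b) x); simpl.
  - rewrite <- (isum_indicator _ _ _ _ _ H2). apply isum_ext; intro y.
    destruct (in_interval (lo2 b) (side b) y); simpl.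
    + now rewrite <- (isum_indicator _ _ _ _ _ H3).
    + unfold isum. now apply csum_zero.
  - unfold isum. apply csum_zero; intros. now apply csum_zero.
Qed.

Lemma box_rsum_indicator b B F : sub_box b B ->
  box_rsum B (fun x y z => if in_box b x y z then F x y z else 0) = box_rsum b F.
Proof.
  intros Hsub. apply RtoC_inj. rewrite !RtoC_box_rsum, <- (box_sum_indicator b B) by exact Hsub.
  apply box_sum_ext. intros. now destruct in_box.
Qed.

Lemma in_box_sub b b' x y z : sub_box b b' -> in_box b x y z = true -> in_box b' x y z = true.
Proof.
  unfold sub_box, subinterval, in_box, in_interval. intros Hsub Hin.
  rewrite !Bool.andb_true_iff, !Z.leb_le, !Z.ltb_lt in *. lia.
Qed.

Lemma box_rsum_mono b B F : sub_box b B -> (forall x y z, 0 <= F x y z) ->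
  box_rsum b F <= box_rsum B F.
Proof.
  intros Hsub HF. rewrite <- (box_rsum_indicator b B) by exact Hsub.
  apply box_rsum_le. intros. destruct in_box; [lra|apply HF].
Qed.

Lemma sub_box_trans b1 b2 b3 : sub_box b1 b2 -> sub_box b2 b3 -> sub_box b1 b3.
Proof. unfold sub_box, subinterval. lia. Qed.

Lemma Cmod_indicator_diff (bS bA bB : bool) (u : C) :
  (bS = true -> bA = true) -> (bS = true -> bB = true) ->
  Cmod ((if bA then u else 0%R) - (if bB then u else 0%R))%C <= Cmod u - (if bS then Cmod u else 0).
Proof.
  intros HA HB. pose proof (Cmod_ge_0 u).
  destruct bS; [rewrite HA, HB by reflexivity|destruct bA, bB];
    [replace (u - u)%C with (RtoC 0) | replace (u - u)%C with (RtoC 0)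
    | replace (u - 0)%C with u | replace (0 - u)%C with (- u)%C
    | replace (0 - 0)%C with (RtoC 0)];
    try (apply injective_projections; simpl; ring); rewrite ?Cmod_0, ?Cmod_opp; lra.
Qed.

(* Both sums agree on [S] and vanish outside [L], so they differ by at most the
   absolute mass of [F] on [L] minus [S]. *)
Lemma box_sum_close F S A B L :
  sub_box S A -> sub_box A L -> sub_box S B -> sub_box B L ->
  Cmod (box_sum A F - box_sum B F) <=
  box_rsum L (fun x y z => Cmod (F x y z)) - box_rsum S (fun x y z => Cmod (F x y z)).
Proof.
  intros HSA HAL HSB HBL.
  rewrite <- (box_sum_indicator A L), <- (box_sum_indicator B L), box_sum_minus by assumption.
  rewrite <- (box_rsum_indicator S L), <- box_rsum_minus by (eapply sub_box_trans; eassumption).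
  eapply Rle_trans; [apply Cmod_box_sum|]. apply box_rsum_le. intros x y z.
  apply Cmod_indicator_diff; apply in_box_sub; assumption.
Qed.

Lemma box_sum_reflect F c1 c2 c3 l1 l2 l3 L :
  box_sum (Box l1 l2 l3 L) (fun x y z => F (- x - c1) (- y - c2) (- z - c3))%Z =
  box_sum (Box (- (l1 + Z.of_nat L - 1) - c1) (- (l2 + Z.of_nat L - 1) - c2)
               (- (l3 + Z.of_nat L - 1) - c3) L)%Z F.
Proof.
  unfold box_sum; simpl.
  rewrite <- (isum_reflect l1 L c1 (fun x => isum _ L (fun y => isum _ L (F x y)))).
  apply isum_ext; intro x.
  rewrite <- (isum_reflect l2 L c2 (fun y => isum _ L (F _ y))).
  apply isum_ext; intro y. apply isum_reflect.
Qed.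

Definition cube (N : nat) : box :=
  Box (- Z.of_nat N) (- Z.of_nat N) (- Z.of_nat N) (2 * N + 1).

Section OddCubeSums.

Variable F : Z -> Z -> Z -> C.
Variables c1 c2 c3 : Z.
Hypothesis F_odd : forall x y z, F x y z = Copp (F (- x - c1) (- y - c2) (- z - c3))%Z.
Hypothesis F_summable : exists K, forall N, box_rsum (cube N) (fun x y z => Cmod (F x y z)) <= K.

Let mass (N : nat) : R := box_rsum (cube N) (fun x y z => Cmod (F x y z)).

Let shift : nat := Z.to_nat (Z.abs c1 + Z.abs c2 + Z.abs c3).

Let reflected_cube (N : nat) : box :=
  Box (- Z.of_nat N - c1) (- Z.of_nat N - c2) (- Z.of_nat N - c3) (2 * N + 1).

Lemma cube_sum_antisym N : box_sum (cube N) F = Copp (box_sum (reflected_cube N) F).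
Proof.
  rewrite (box_sum_ext _ _ _ F_odd), box_sum_opp. unfold cube, reflected_cube.
  rewrite box_sum_reflect. do 4 f_equal; lia.
Qed.

(* The reflected cube lies between [cube (N - shift)] and [cube (N + shift)]. *)
Lemma Cmod_cube_sum_le N : (shift <= N)%nat ->
  2 * Cmod (box_sum (cube N) F) <= mass (N + shift) - mass (N - shift).
Proof.
  intros HN.
  replace (2 * Cmod (box_sum (cube N) F))
    with (Cmod (box_sum (cube N) F - box_sum (reflected_cube N) F)).
  - apply box_sum_close; unfold sub_box, subinterval, cube, reflected_cube, shift;
      cbn [lo1 lo2 lo3 side]; lia.
  - rewrite cube_sum_antisym. set (u := box_sum _ F).
    replace (- u - u)%C with (2 * (- u))%C by (apply injective_projections; simpl; ring).
    rewrite Cmod_mult, Cmod_opp, Cmod_R, Rabs_pos_eq by lra. reflexivity.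
Qed.

Lemma mass_cv : { m | Un_cv mass m }.
Proof.
  apply growing_cv.
  - intros N. apply box_rsum_mono; [unfold sub_box, subinterval, cube; cbn [lo1 lo2 lo3 side]; lia|].
    intros. apply Cmod_ge_0.
  - destruct F_summable as [K HK]. exists K. intros x [N ->]. apply HK.
Qed.

Lemma cube_sum_cvg0 : filterlim (fun N => box_sum (cube N) F) eventually (locally (RtoC 0)).
Proof.
  destruct mass_cv as [m Hm].
  apply filterlim_locally. intros eps.
  destruct (Hm eps (cond_pos eps)) as [N0 HN0].
  exists (N0 + shift)%nat. intros N HN.
  apply C_NormedModule_mixin_compat1.
  replace (minus (box_sum (cube N) F) (RtoC 0)) with (box_sum (cube N) F)
    by (apply injective_projections; simpl; ring).
  pose proof (Cmod_cube_sum_le N ltac:(lia)) as Hle.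
  pose proof (HN0 (N + shift)%nat ltac:(lia)) as H1.
  pose proof (HN0 (N - shift)%nat ltac:(lia)) as H2.
  unfold R_dist in H1, H2. apply Rabs_def2 in H1. apply Rabs_def2 in H2. lra.
Qed.

End OddCubeSums.

(** * Gaussian sums *)

Definition softsign (x : R) : R := x / (1 + Rabs x).

Lemma softsign_bounded x : -1 <= softsign x <= 1.
Proof.
  unfold softsign. pose proof (Rabs_pos x).
  split; apply Rmult_le_reg_r with (1 + Rabs x); try lra;
    unfold Rdiv; rewrite Rmult_assoc, Rinv_l by lra; unfold Rabs; destruct Rcase_abs; lra.
Qed.

Lemma softsign_increment x : / (4 * (1 + x ^ 2)) <= softsign (x + 1) - softsign x.
Proof.
  unfold softsign. destruct (Rle_dec 0 x); [|destruct (Rle_dec (-1) x)].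
  - rewrite (Rabs_right x), (Rabs_right (x + 1)) by lra.
    replace ((x + 1) / (1 + (x + 1)) - x / (1 + x)) with (/ ((x + 2) * (x + 1))) by (field; lra).
    apply Rinv_le_contravar; nra.
  - rewrite (Rabs_left x), (Rabs_right (x + 1)) by lra.
    replace ((x + 1) / (1 + (x + 1)) - x / (1 + - x))
      with ((1 - 2 * x - 2 * x ^ 2) / ((x + 2) * (1 - x))) by (field; lra).
    apply Rmult_le_reg_r with ((x + 2) * (1 - x)); [nra|].
    unfold Rdiv. rewrite Rmult_assoc, Rinv_l by nra.
    apply Rmult_le_reg_l with (4 * (1 + x ^ 2)); [nra|].
    rewrite <- Rmult_assoc, Rinv_r by nra. nra.
  - rewrite (Rabs_left x), (Rabs_left (x + 1)) by lra.
    replace ((x + 1) / (1 + - (x + 1)) - x / (1 + - x)) with (/ (- x * (1 - x))) by (field; lra).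
    apply Rinv_le_contravar; nra.
Qed.

(* Combines [exp (- t) <= 1 / (1 + t)] with [D (1 + x^2) <= (D + 1) (1 + D x^2)]. *)
Lemma gaussian_le_increment D x : 0 < D ->
  exp (- (D * x ^ 2)) <= 4 * (1 + / D) * (softsign (x + 1) - softsign x).
Proof.
  intros HD. assert (0 < / D) by (apply Rinv_0_lt_compat; exact HD).
  eapply Rle_trans; [|apply Rmult_le_compat_l; [lra|apply softsign_increment]].
  rewrite exp_Ropp. pose proof (exp_ineq1_le (D * x ^ 2)). assert (0 <= D * x ^ 2) by nra.
  apply Rle_trans with (/ (1 + D * x ^ 2)); [apply Rinv_le_contravar; lra|].
  replace (4 * (1 + / D) * / (4 * (1 + x ^ 2))) with ((D + 1) / (D * (1 + x ^ 2))) by (field; nra).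
  assert (E : (D + 1) / (D * (1 + x ^ 2)) - / (1 + D * x ^ 2)
              = (1 + D ^ 2 * x ^ 2) / (D * (1 + x ^ 2) * (1 + D * x ^ 2))) by (field; nra).
  assert (0 <= (1 + D ^ 2 * x ^ 2) / (D * (1 + x ^ 2) * (1 + D * x ^ 2))).
  { unfold Rdiv. apply Rmult_le_pos; [nra|apply Rlt_le, Rinv_0_lt_compat; nra]. }
  lra.
Qed.

Lemma irsum_scal l L c f : irsum l L (fun z => c * f z) = c * irsum l L f.
Proof. apply rsum_scal. Qed.

Lemma irsum_telescope l L s (g : R -> R) :
  irsum l L (fun z => g (IZR z + s + 1) - g (IZR z + s)) = g (IZR l + INR L + s) - g (IZR l + s).
Proof.
  unfold irsum. induction L as [|L IH]; simpl rsum.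
  - simpl. rewrite Rplus_0_r. ring.
  - rewrite IH, S_INR, plus_IZR, <- INR_IZR_INZ.
    replace (IZR l + INR L + s + 1) with (IZR l + (INR L + 1) + s) by ring. ring.
Qed.

Definition gauss_bound (D : R) : R := 8 * (1 + / D).

Lemma gauss_bound_pos D : 0 < D -> 0 < gauss_bound D.
Proof. intros HD. pose proof (Rinv_0_lt_compat D HD). unfold gauss_bound. lra. Qed.

(* [softsign] turns the sum into a telescoping one bounded by its total variation 2. *)
Lemma irsum_gaussian_le D s l L : 0 < D ->
  irsum l L (fun z => exp (- (D * (IZR z + s) ^ 2))) <= gauss_bound D.
Proof.
  intros HD. assert (0 < / D) by (apply Rinv_0_lt_compat; exact HD).
  eapply Rle_trans; [apply irsum_le; intros z; apply (gaussian_le_increment D _ HD)|].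
  rewrite irsum_scal, irsum_telescope.
  pose proof (softsign_bounded (IZR l + INR L + s)). pose proof (softsign_bounded (IZR l + s)).
  unfold gauss_bound. nra.
Qed.

Lemma irsum_gaussian_weighted_le D s B g l L : 0 < D -> 0 <= B ->
  (forall z, g z <= B * exp (- (D * (IZR z + s) ^ 2))) -> irsum l L g <= B * gauss_bound D.
Proof.
  intros HD HB Hg. eapply Rle_trans; [apply irsum_le, Hg|].
  rewrite irsum_scal. apply Rmult_le_compat_l; [exact HB|]. now apply irsum_gaussian_le.
Qed.

Lemma box_rsum_gaussian_le b h C0 d1 d2 d3 s1 (s2 : Z -> R) (s3 : Z -> Z -> R) :
  0 <= C0 -> 0 < d1 -> 0 < d2 -> 0 < d3 ->
  (forall x y z, h x y z <= C0 * exp (- (d1 * (IZR x + s1) ^ 2))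
                    * exp (- (d2 * (IZR y + s2 x) ^ 2)) * exp (- (d3 * (IZR z + s3 x y) ^ 2))) ->
  box_rsum b h <= C0 * gauss_bound d3 * gauss_bound d2 * gauss_bound d1.
Proof.
  intros HC H1 H2 H3 Hh.
  pose proof (gauss_bound_pos _ H2). pose proof (gauss_bound_pos _ H3).
  assert (Hexp : forall t, 0 <= exp t) by (intros; apply Rlt_le, exp_pos).
  apply irsum_gaussian_weighted_le with (s := s1);
    [exact H1|apply Rmult_le_pos; [apply Rmult_le_pos|]; lra|]. intros x.
  replace (C0 * gauss_bound d3 * gauss_bound d2 * exp (- (d1 * (IZR x + s1) ^ 2)))
    with (C0 * exp (- (d1 * (IZR x + s1) ^ 2)) * gauss_bound d3 * gauss_bound d2) by ring.
  apply irsum_gaussian_weighted_le with (s := s2 x);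
    [exact H2|apply Rmult_le_pos; [apply Rmult_le_pos; [lra|apply Hexp]|lra]|]. intros y.
  replace (C0 * exp (- (d1 * (IZR x + s1) ^ 2)) * gauss_bound d3 * exp (- (d2 * (IZR y + s2 x) ^ 2)))
    with (C0 * exp (- (d1 * (IZR x + s1) ^ 2)) * exp (- (d2 * (IZR y + s2 x) ^ 2)) * gauss_bound d3)
    by ring.
  apply irsum_gaussian_weighted_le with (s := s3 x y);
    [exact H3|apply Rmult_le_pos; [apply Rmult_le_pos; [lra|apply Hexp]|apply Hexp]|apply Hh].
Qed.

Lemma cexp_add u v : cexp (Cplus u v) = Cmult (cexp u) (cexp v).
Proof.
  unfold cexp. apply injective_projections; simpl;
    rewrite exp_plus, ?cos_plus, ?sin_plus; ring.
Qed.

Lemma Cmod_cexp u : Cmod (cexp u) = exp (fst u).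
Proof.
  unfold cexp, Cmod. cbn [fst snd].
  replace ((exp (fst u) * cos (snd u)) ^ 2 + (exp (fst u) * sin (snd u)) ^ 2) with (exp (fst u) ^ 2).
  - apply sqrt_pow2, Rlt_le, exp_pos.
  - pose proof (sin2_cos2 (snd u)) as H. unfold Rsqr in H. nra.
Qed.

Lemma cexp_2PI_int (m : Z) : cexp (0, 2 * IZR m * PI) = 1.
Proof.
  unfold cexp. cbn [fst snd]. rewrite exp_0.
  assert (Hnat : forall k, cos (2 * INR k * PI) = 1 /\ sin (2 * INR k * PI) = 0).
  { intros k. rewrite <- (Rplus_0_l (2 * INR k * PI)), cos_period, sin_period.
    split; [apply cos_0|apply sin_0]. }
  destruct (Z_le_gt_dec 0 m) as [Hm|Hm].
  - rewrite <- (Z2Nat.id m), <- INR_IZR_INZ by exact Hm.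
    destruct (Hnat (Z.to_nat m)) as [-> ->]. apply injective_projections; simpl; ring.
  - replace (2 * IZR m * PI) with (- (2 * INR (Z.to_nat (- m)) * PI))
      by (rewrite INR_IZR_INZ, Z2Nat.id by lia; rewrite opp_IZR; ring).
    rewrite cos_neg, sin_neg. destruct (Hnat (Z.to_nat (- m))) as [-> ->].
    apply injective_projections; simpl; ring.
Qed.

Lemma cexp_PI_int (m : Z) : cexp (0, PI * IZR m) = if Z.even m then 1 else - 1.
Proof.
  destruct (Z.even m) eqn:Hm.
  - apply Z.even_spec in Hm as [q ->]. rewrite <- (cexp_2PI_int q). f_equal.
    apply injective_projections; cbn [fst snd]; rewrite ?mult_IZR; ring.
  - assert (Hodd : Z.odd m = true) by (rewrite <- Z.negb_even, Hm; reflexivity).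
    apply Z.odd_spec in Hodd as [q ->].
    replace (0, PI * IZR (2 * q + 1)) with (Cplus (0, 2 * IZR q * PI) (0, PI))
      by (apply injective_projections; cbn [fst snd Cplus]; rewrite ?plus_IZR, ?mult_IZR; ring).
    rewrite cexp_add, cexp_2PI_int. unfold cexp. cbn [fst snd].
    rewrite exp_0, cos_PI, sin_PI. apply injective_projections; simpl; ring.
Qed.

Lemma estar_parity a : estar a = if Z.even (Qf a) then 1 else - 1.
Proof.
  rewrite <- cexp_PI_int. unfold estar. f_equal.
  unfold csum, half, cPI, cI, Qf, zsum. apply injective_projections; simpl;
    rewrite ?plus_IZR, ?mult_IZR; field.
Qed.

(** * Theta constants with odd characteristic vanish *)

Definition ternary_form (q00 q11 q22 q01 q02 q12 v0 v1 v2 : R) : R :=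
  q00 * v0 ^ 2 + q11 * v1 ^ 2 + q22 * v2 ^ 2
  + 2 * q01 * v0 * v1 + 2 * q02 * v0 * v2 + 2 * q12 * v1 * v2.

(* Completing squares (the LDL decomposition), starting from the last variable. *)
Lemma ternary_form_squares q00 q11 q22 q01 q02 q12 :
  (forall v0 v1 v2, (v0 <> 0 \/ v1 <> 0 \/ v2 <> 0) ->
     0 < ternary_form q00 q11 q22 q01 q02 q12 v0 v1 v2) ->
  exists D1 D2 D3 al be ga, 0 < D1 /\ 0 < D2 /\ 0 < D3 /\
    forall v0 v1 v2, ternary_form q00 q11 q22 q01 q02 q12 v0 v1 v2 =
      D3 * (v2 + al * v0 + be * v1) ^ 2 + D2 * (v1 + ga * v0) ^ 2 + D1 * v0 ^ 2.
Proof.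
  intros Hpos.
  assert (H22 : 0 < q22) by (specialize (Hpos 0 0 1 ltac:(right; right; lra)); unfold ternary_form in Hpos; lra).
  set (p11 := q11 - q12 ^ 2 / q22).
  assert (H11 : 0 < p11).
  { specialize (Hpos 0 1 (- (q12 / q22)) ltac:(right; left; lra)).
    replace (ternary_form _ _ _ _ _ _ 0 1 _) with p11 in Hpos; [exact Hpos|].
    unfold ternary_form, p11. field. lra. }
  assert (Hdet : 0 < q11 * q22 - q12 ^ 2).
  { replace (q11 * q22 - q12 ^ 2) with (p11 * q22) by (unfold p11; field; lra). nra. }
  set (p01 := q01 - q02 * q12 / q22). set (p00 := q00 - q02 ^ 2 / q22).
  set (ga := p01 / p11). set (al := q02 / q22). set (be := q12 / q22).
  set (D1 := p00 - p01 ^ 2 / p11).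
  assert (H00 : 0 < D1).
  { specialize (Hpos 1 (- ga) (- (al - be * ga)) ltac:(left; lra)).
    replace (ternary_form _ _ _ _ _ _ 1 _ _) with D1 in Hpos; [exact Hpos|].
    unfold ternary_form, D1, ga, al, be, p00, p01, p11 in *. field. split; lra. }
  exists D1, p11, q22, al, be, ga. repeat split; try assumption. intros.
  unfold ternary_form, D1, ga, al, be, p00, p01, p11 in *. field. split; lra.
Qed.

Definition im_form (Zm : nat -> nat -> C) : R -> R -> R -> R :=
  ternary_form (Im (Zm 0 0)%nat) (Im (Zm 1 1)%nat) (Im (Zm 2 2)%nat)
               (Im (Zm 0 1)%nat) (Im (Zm 0 2)%nat) (Im (Zm 1 2)%nat).

Lemma im_form_pos Zm : in_H3 Zm ->
  forall v0 v1 v2, (v0 <> 0 \/ v1 <> 0 \/ v2 <> 0) -> 0 < im_form Zm v0 v1 v2.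
Proof.
  intros [Hsym Hpos] v0 v1 v2 Hv.
  set (v := fun i => match i with 0%nat => v0 | 1%nat => v1 | 2%nat => v2 | _ => 0 end).
  replace (im_form Zm v0 v1 v2) with (rsum 3 (fun i => rsum 3 (fun j => v i * Im (Zm i j) * v j))).
  - apply Hpos. destruct Hv as [H|[H|H]]; [exists 0%nat|exists 1%nat|exists 2%nat]; split; auto; lia.
  - unfold im_form, ternary_form. simpl.
    rewrite (Hsym 1 0)%nat, (Hsym 2 0)%nat, (Hsym 2 1)%nat by lia. ring.
Qed.

Definition theta_exponent (a : hchar) (Zm : nat -> nat -> C) (n : nat -> Z) : C :=
  let nC := fun j => RtoC (IZR (n j)) in
  Cplus
    (Cmult (Cmult cPI cI)
       (csum 3 (fun j => csum 3 (fun k => Cmult (Cmult (nC j) (Zm j k)) (nC k)))))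
    (Cmult (Cmult (RtoC 2) (Cmult cPI cI))
       (csum 3 (fun j => Cmult (nC j)
          (Cplus (half a (j + 3)%nat) (csum 3 (fun k => Cmult (Zm j k) (half a k))))))).

Lemma theta_term_cexp a Zm n : theta_term a Zm n = cexp (theta_exponent a Zm n).
Proof. reflexivity. Qed.

Lemma Cmod_theta_term a Zm x y z : in_H3 Zm ->
  Cmod (theta_term a Zm (vec3 x y z)) =
  exp (PI * im_form Zm (IZR (a 0%nat) / 2) (IZR (a 1%nat) / 2) (IZR (a 2%nat) / 2)
       - PI * im_form Zm (IZR x + IZR (a 0%nat) / 2) (IZR y + IZR (a 1%nat) / 2)
                         (IZR z + IZR (a 2%nat) / 2)).
Proof.
  intros [Hsym _]. rewrite theta_term_cexp, Cmod_cexp. f_equal.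
  unfold theta_exponent, csum, half, cPI, cI, vec3, im_form, ternary_form, Im. simpl.
  rewrite (Hsym 1 0)%nat, (Hsym 2 0)%nat, (Hsym 2 1)%nat by lia. ring.
Qed.

Lemma theta_term_mass_bounded a Zm : in_H3 Zm -> exists K, forall N,
  box_rsum (cube N) (fun x y z => Cmod (theta_term a Zm (vec3 x y z))) <= K.
Proof.
  intros HZ.
  destruct (ternary_form_squares _ _ _ _ _ _ (im_form_pos Zm HZ))
    as (D1 & D2 & D3 & al & be & ga & P1 & P2 & P3 & Hsq).
  set (s := fun i => IZR (a i) / 2).
  set (C0 := exp (PI * im_form Zm (s 0%nat) (s 1%nat) (s 2%nat))).
  exists (C0 * gauss_bound (PI * D3) * gauss_bound (PI * D2) * gauss_bound (PI * D1)). intros N.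
  apply box_rsum_gaussian_le with (s1 := s 0%nat)
    (s2 := fun x => s 1%nat + ga * (IZR x + s 0%nat))
    (s3 := fun x y => s 2%nat + al * (IZR x + s 0%nat) + be * (IZR y + s 1%nat)).
  - apply Rlt_le, exp_pos.
  - pose proof PI_RGT_0. apply Rmult_lt_0_compat; assumption.
  - pose proof PI_RGT_0. apply Rmult_lt_0_compat; assumption.
  - pose proof PI_RGT_0. apply Rmult_lt_0_compat; assumption.
  - intros x y z. rewrite Cmod_theta_term by exact HZ. unfold im_form at 2. rewrite Hsq.
    unfold C0, s. rewrite <- !exp_plus. right. f_equal. ring.
Qed.

Lemma theta_exponent_reflect a Zm x y z : in_H3 Zm ->
  theta_exponent a Zm (vec3 x y z) =
  Cplus (theta_exponent a Zm (vec3 (- x - a 0%nat) (- y - a 1%nat) (- z - a 2%nat))%Z)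
        (0, PI * IZR (2 * (x * a 3%nat + y * a 4%nat + z * a 5%nat) + Qf a)%Z).
Proof.
  intros [Hsym _].
  unfold theta_exponent, csum, half, cPI, cI, vec3, Qf, zsum. cbn [Nat.add].
  rewrite (Hsym 1 0)%nat, (Hsym 2 0)%nat, (Hsym 2 1)%nat by lia.
  repeat first [rewrite minus_IZR | rewrite opp_IZR | rewrite plus_IZR | rewrite mult_IZR].
  apply injective_projections; simpl; field.
Qed.

Lemma theta_term_reflect a Zm x y z : in_H3 Zm -> Z.even (Qf a) = false ->
  theta_term a Zm (vec3 x y z) =
  Copp (theta_term a Zm (vec3 (- x - a 0%nat) (- y - a 1%nat) (- z - a 2%nat))%Z).
Proof.
  intros HZ Hodd. rewrite !theta_term_cexp, theta_exponent_reflect, cexp_add, cexp_PI_int by exact HZ.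
  rewrite Z.even_add, Z.even_mul, Hodd. simpl. apply injective_projections; simpl; ring.
Qed.

Lemma theta_box_cube a Zm N :
  theta_box a Zm N = box_sum (cube N) (fun x y z => theta_term a Zm (vec3 x y z)).
Proof.
  unfold theta_box, box_sum, isum, cube. cbn [lo1 lo2 lo3 side].
  repeat (apply csum_ext; intros). do 2 f_equal; lia.
Qed.

Theorem odd_theta_vanishes a Zm : in_H3 Zm -> Z.even (Qf a) = false -> theta_vanishes a Zm.
Proof.
  intros HZ Hodd. exists (RtoC 0). split.
  - apply (filterlim_ext (fun N => box_sum (cube N) (fun x y z => theta_term a Zm (vec3 x y z)))).
    + intros N. symmetry. apply theta_box_cube.
    + apply (cube_sum_cvg0 _ (a 0%nat) (a 1%nat) (a 2%nat)).
      * intros x y z. now apply theta_term_reflect.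
      * now apply theta_term_mass_bounded.
  - symmetry. apply Cmult_0_r.
Qed.

(** * Characteristics modulo [Z^6] *)

Open Scope Z_scope.

Lemma heven_iff a : heven a <-> Z.even (Qf a) = true.
Proof.
  unfold heven. rewrite estar_parity.
  destruct (Z.even (Qf a)); split; intros H; try reflexivity; try discriminate.
  apply (f_equal fst) in H. simpl in H. lra.
Qed.

Lemma estar_eq_m1 a : estar a = RtoC (-1) <-> Z.even (Qf a) = false.
Proof.
  rewrite estar_parity.
  destruct (Z.even (Qf a)); split; intros H; try reflexivity; try discriminate.
  apply (f_equal fst) in H. simpl in H. lra.
Qed.

Lemma even_eq_of_mod2 m n : (m - n) mod 2 = 0 -> Z.even m = Z.even n.
Proof.
  rewrite Zmod_even, Z.even_sub. destruct (Z.even m), (Z.even n); easy.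
Qed.

Lemma Gamma12_parity g x : Gamma12 g -> Z.even (Qf (mv g x)) = Z.even (Qf x).
Proof. intros [_ HQ]. apply even_eq_of_mod2, HQ. Qed.

Lemma hequiv_spec a b : hequiv a b <-> exists w, forall k, (k < 6)%nat -> a k = b k + 2 * w k.
Proof.
  split.
  - intros H. exists (fun k => (a k - b k) / 2). intros k Hk.
    pose proof (Z.div_mod (a k - b k) 2) as E. rewrite (H k Hk) in E. lia.
  - intros [w Hw] k Hk. rewrite Hw by exact Hk.
    replace (b k + 2 * w k - b k) with (w k * 2) by ring. apply Z.mod_mul. lia.
Qed.

Lemma hequiv_sym a b : hequiv a b -> hequiv b a.
Proof.
  rewrite !hequiv_spec. intros [w Hw]. exists (fun k => - w k). intros k Hk.
  rewrite Hw by exact Hk. ring.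
Qed.

Lemma hequiv_trans a b c : hequiv a b -> hequiv b c -> hequiv a c.
Proof.
  rewrite !hequiv_spec. intros [w Hw] [w' Hw']. exists (fun k => w k + w' k). intros k Hk.
  rewrite Hw, Hw' by exact Hk. ring.
Qed.

Ltac expand_halves Hw :=
  unfold mv, sform, Qf, zsum; cbn [Nat.add];
  rewrite (Hw 0%nat), (Hw 1%nat), (Hw 2%nat), (Hw 3%nat), (Hw 4%nat), (Hw 5%nat) by lia.

Lemma hequiv_parity a b : hequiv a b -> Z.even (Qf a) = Z.even (Qf b).
Proof.
  rewrite hequiv_spec. intros [w Hw]. apply even_eq_of_mod2. expand_halves Hw.
  match goal with |- ?e mod 2 = 0 =>
    replace e with ((b 0%nat * w 3%nat + w 0%nat * b 3%nat + 2 * w 0%nat * w 3%nat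
                   + b 1%nat * w 4%nat + w 1%nat * b 4%nat + 2 * w 1%nat * w 4%nat
                   + b 2%nat * w 5%nat + w 2%nat * b 5%nat + 2 * w 2%nat * w 5%nat) * 2) by ring end.
  apply Z.mod_mul. lia.
Qed.

Lemma hequiv_mv g a b : hequiv a b -> hequiv (mv g a) (mv g b).
Proof.
  rewrite !hequiv_spec. intros [w Hw]. exists (mv g w). intros k _. expand_halves Hw. ring.
Qed.

Lemma sform_halves p q w u : (forall k, (k < 6)%nat -> p k = q k + 2 * w k) ->
  sform p u = sform q u + 2 * sform w u.
Proof. intros Hw. expand_halves Hw. ring. Qed.

Definition unit6 (j : nat) : nat -> Z := fun m => if Nat.eqb m j then 1 else 0.

(* Pairing with the unit vectors recovers every coordinate, and [g] preserves the pairing. *)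
Lemma hequiv_mv_inv g a b : Sp6Z g -> hequiv (mv g a) (mv g b) -> hequiv a b.
Proof.
  intros Hg Hab.
  assert (Hpair : forall v, Z.even (sform a v - sform b v) = true).
  { intros v. rewrite <- (Hg a), <- (Hg b).
    apply hequiv_spec in Hab as [w Hw]. rewrite (sform_halves _ _ _ _ Hw).
    replace (sform (mv g b) (mv g v) + 2 * sform w (mv g v) - sform (mv g b) (mv g v))
      with (2 * sform w (mv g v)) by ring.
    apply Z.even_mul. }
  intros k Hk. rewrite Zmod_even.
  enough (Z.even (a k - b k) = true) as -> by reflexivity.
  destruct (Nat.ltb_spec k 3).
  - rewrite <- (Hpair (unit6 (k + 3))). f_equal.
    destruct k as [|[|[|k]]]; try lia; unfold sform, zsum, unit6; simpl; ring.
  - rewrite <- Z.even_opp, <- (Hpair (unit6 (k - 3))). f_equal.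
    destruct k as [|[|[|[|[|[|k]]]]]]; try lia; unfold sform, zsum, unit6; simpl; ring.
Qed.

(** * Mumford's map *)

(* Indices [1, 3, 5, 7] stand for the elements [2, 4, 6, oo] of [B]. *)
Definition U_tilde (i : nat) : bool :=
  match i with 1 | 3 | 5 | 7 => true | _ => false end%nat.

Lemma U_geta_eq g : Gamma12 g -> forall i, (i < 8)%nat -> U_geta g i = U_tilde i.
Proof.
  intros Hg i Hi. unfold U_geta.
  destruct (excluded_middle_informative _) as [E|E];
    rewrite estar_eq_m1 in E; unfold geta in E; rewrite Gamma12_parity in E by exact Hg;
    destruct i as [|[|[|[|[|[|[|[|i]]]]]]]]; try lia; try reflexivity;
    vm_compute in E; try discriminate; exfalso; now apply E.
Qed.

Lemma cardB_ext S T : (forall i, (i < 8)%nat -> S i = T i) -> cardB S = cardB T.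
Proof.
  intros H. unfold cardB. simpl.
  rewrite (H 0%nat), (H 1%nat), (H 2%nat), (H 3%nat), (H 4%nat), (H 5%nat), (H 6%nat), (H 7%nat)
    by lia.
  reflexivity.
Qed.

Lemma cardB_le S : (cardB S <= 8)%nat.
Proof. unfold cardB. rewrite <- (length_seq 8 0) at 2. apply List.filter_length_le. Qed.

Definition hequivb (a b : hchar) : bool :=
  forallb (fun k => (a k - b k) mod 2 =? 0) (List.seq 0 6).

Lemma hequivb_spec a b : hequivb a b = true <-> hequiv a b.
Proof.
  unfold hequivb, hequiv. rewrite forallb_forall. split.
  - intros H k Hk. apply Z.eqb_eq, H, in_seq. lia.
  - intros H k Hk. apply in_seq in Hk. apply Z.eqb_eq, H. lia.
Qed.

Definition mumford_check (S : nat -> bool) : bool :=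
  let c := cardB (symdiff S U_tilde) in
  implb (Nat.even (cardB S))
    (Bool.eqb (Z.even (Qf (eta_tilde S))) (Nat.eqb (c mod 4) 0)
     && Bool.eqb (hequivb (eta_tilde S) vU) (Nat.eqb c 0 || Nat.eqb c 8)).

(* [mumford_check] only evaluates [S] on [0..7], so it suffices to check 256 cases. *)
Lemma mumford_check_all S : mumford_check S = true.
Proof.
  change (mumford_check S) with
    (mumford_check (fun i => nth i [S 0; S 1; S 2; S 3; S 4; S 5; S 6; S 7]%nat false)).
  destruct (S 0%nat), (S 1%nat), (S 2%nat), (S 3%nat), (S 4%nat), (S 5%nat), (S 6%nat), (S 7%nat);
    vm_compute; reflexivity.
Qed.

Lemma eta_tilde_classification S : Nat.even (cardB S) = true ->
  let c := cardB (symdiff S U_tilde) in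
  (Z.even (Qf (eta_tilde S)) = true <-> (c mod 4 = 0)%nat) /\
  (hequiv (eta_tilde S) vU <-> c = 0%nat \/ c = 8%nat).
Proof.
  intros HS c. pose proof (mumford_check_all S) as H.
  unfold mumford_check in H. fold c in H. rewrite HS in H. simpl in H.
  apply andb_prop in H as [H1 H2]. apply Bool.eqb_prop in H1, H2.
  rewrite <- hequivb_spec, H1, H2, Nat.eqb_eq, Bool.orb_true_iff, !Nat.eqb_eq. tauto.
Qed.

(** * Transitivity of [Gamma12] on nonzero even characteristics *)

(* The symplectic transvection [x |-> x + <x, v> v]. *)
Definition transvection (v : nat -> Z) : nat -> nat -> Z := fun i j =>
  (if Nat.eqb i j then 1 else 0) + v i * (if Nat.ltb j 3 then v (j + 3)%nat else - v (j - 3)%nat).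

Lemma Qf_transvection v x :
  Qf (mv (transvection v) x) = Qf x + (1 + Qf v) * sform x v ^ 2
    + 2 * sform x v * (x 3%nat * v 0%nat + x 4%nat * v 1%nat + x 5%nat * v 2%nat).
Proof.
  unfold Qf, sform, mv, zsum, transvection. cbn [Nat.eqb Nat.ltb Nat.leb Nat.add Nat.sub]. ring.
Qed.

Lemma transvection_Gamma12 v : Z.even (Qf v) = false -> Gamma12 (transvection v).
Proof.
  intros Hodd. split.
  - intros x y. unfold sform, mv, zsum, transvection. cbn [Nat.eqb Nat.ltb Nat.leb Nat.add Nat.sub].
    ring.
  - intros x. rewrite Qf_transvection.
    assert (Hv : Z.odd (Qf v) = true) by (rewrite <- Z.negb_even, Hodd; reflexivity).
    apply Z.odd_spec in Hv as [m ->].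
    generalize (sform x v) (x 3%nat * v 0%nat + x 4%nat * v 1%nat + x 5%nat * v 2%nat). intros s t.
    replace (Qf x + (1 + (2 * m + 1)) * s ^ 2 + 2 * s * t - Qf x)
      with (((m + 1) * s ^ 2 + s * t) * 2) by ring.
    apply Z.mod_mul. lia.
Qed.

Definition mm (g h : nat -> nat -> Z) : nat -> nat -> Z :=
  fun i j => zsum 6 (fun k => g i k * h k j).

Lemma mv_mm g h x : mv (mm g h) x = mv g (mv h x).
Proof. apply functional_extensionality. intros i. unfold mv, mm, zsum. simpl. ring. Qed.

Lemma Gamma12_mm g h : Gamma12 g -> Gamma12 h -> Gamma12 (mm g h).
Proof.
  intros [Sg Qg] [Sh Qh]. split.
  - intros x y. now rewrite !mv_mm, Sg, Sh.
  - intros x. rewrite mv_mm. apply Zmod_divides; [lia|].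
    destruct (proj1 (Zmod_divides _ 2 ltac:(lia)) (Qg (mv h x))) as [c1 H1].
    destruct (proj1 (Zmod_divides _ 2 ltac:(lia)) (Qh x)) as [c2 H2].
    exists (c1 + c2). lia.
Qed.

Definition bit_vector (n : nat) : nat -> Z := fun k => Z.b2z (Nat.testbit n k).

Definition vadd (v w : nat -> Z) : nat -> Z := fun k => v k + w k.

(* [T_(w + t) o T_(vU + w)] maps [vU] to [t] as soon as [<vU, w>] and [<w, t>] are odd. *)
Definition two_transvections_via (t w : hchar) : bool :=
  negb (Z.even (Qf (vadd vU w))) && negb (Z.even (Qf (vadd w t)))
  && hequivb (mv (transvection (vadd w t)) (mv (transvection (vadd vU w)) vU)) t.

Lemma two_transvections_via_sound t w : two_transvections_via t w = true ->
  exists g, Gamma12 g /\ hequiv (mv g vU) t.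
Proof.
  unfold two_transvections_via. intros H.
  apply andb_prop in H as [H Hmove]. apply andb_prop in H as [H1 H2].
  apply Bool.negb_true_iff in H1, H2.
  exists (mm (transvection (vadd w t)) (transvection (vadd vU w))). split.
  - apply Gamma12_mm; apply transvection_Gamma12; assumption.
  - rewrite mv_mm. apply hequivb_spec. exact Hmove.
Qed.

Lemma even_bits_reached b0 b1 b2 b3 b4 b5 :
  let t := vec6 (Z.b2z b0) (Z.b2z b1) (Z.b2z b2) (Z.b2z b3) (Z.b2z b4) (Z.b2z b5) in
  Z.even (Qf t) = true -> (b0 || b1 || b2 || b3 || b4 || b5)%bool = true ->
  existsb (two_transvections_via t) (map bit_vector (seq 0 64)) = true.
Proof.
  destruct b0, b1, b2, b3, b4, b5; vm_compute; intros; first [reflexivity | discriminate].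
Qed.

Lemma b2z_odd_sub_mod2 d : (Z.b2z (Z.odd d) - d) mod 2 = 0.
Proof.
  rewrite Zmod_even, Z.even_sub, <- !Z.negb_odd. destruct (Z.odd d); reflexivity.
Qed.

Lemma odd_entry_of_nonzero delta : ~ hequiv delta hzero ->
  (Z.odd (delta 0%nat) || Z.odd (delta 1%nat) || Z.odd (delta 2%nat)
   || Z.odd (delta 3%nat) || Z.odd (delta 4%nat) || Z.odd (delta 5%nat))%bool = true.
Proof.
  intros Hnz. apply Bool.not_false_iff_true. intros Hall. apply Hnz.
  rewrite !Bool.orb_false_iff in Hall. destruct Hall as [[[[[H0 H1] H2] H3] H4] H5].
  intros k Hk. unfold hzero. rewrite Z.sub_0_r, Zmod_even, <- Z.negb_odd.
  destruct k as [|[|[|[|[|[|k]]]]]]; try lia;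
    [rewrite H0|rewrite H1|rewrite H2|rewrite H3|rewrite H4|rewrite H5]; reflexivity.
Qed.

Theorem Gamma12_transitive_even delta : heven delta -> ~ hequiv delta hzero ->
  exists g, Gamma12 g /\ hequiv (mv g vU) delta.
Proof.
  intros Heven Hnz.
  set (t := vec6 (Z.b2z (Z.odd (delta 0%nat))) (Z.b2z (Z.odd (delta 1%nat)))
                 (Z.b2z (Z.odd (delta 2%nat))) (Z.b2z (Z.odd (delta 3%nat)))
                 (Z.b2z (Z.odd (delta 4%nat))) (Z.b2z (Z.odd (delta 5%nat)))).
  assert (Ht : hequiv t delta).
  { intros k Hk. destruct k as [|[|[|[|[|[|k]]]]]]; try lia; apply b2z_odd_sub_mod2. }
  assert (Hreach : existsb (two_transvections_via t) (map bit_vector (seq 0 64)) = true).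
  { apply even_bits_reached; [|now apply odd_entry_of_nonzero].
    apply (eq_trans (hequiv_parity _ _ Ht)). now apply heven_iff. }
  apply existsb_exists in Hreach as [w [_ Hw]].
  destruct (two_transvections_via_sound t w Hw) as [g [Hg Hgt]].
  exists g. split; [exact Hg|]. exact (hequiv_trans _ _ _ Hgt Ht).
Qed.

(** * The Vanishing Criterion *)

Lemma geta_hequiv_iff g S delta : Gamma12 g -> hequiv (mv g vU) delta ->
  hequiv (geta g S) delta <-> hequiv (eta_tilde S) vU.
Proof.
  intros Hg Hdelta. unfold geta. split; intros H.
  - apply (hequiv_mv_inv g); [apply Hg|].
    exact (hequiv_trans _ _ _ H (hequiv_sym _ _ Hdelta)).
  - exact (hequiv_trans _ _ _ (hequiv_mv g _ _ H) Hdelta).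
Qed.

Lemma vanishing_criterion_of_image Zm delta g : in_H3 Zm ->
  (forall a : hchar, heven a -> (theta_vanishes a Zm <-> hequiv a delta)) ->
  Gamma12 g -> hequiv (mv g vU) delta -> vanishing_criterion Zm g.
Proof.
  intros HZ Hth Hg Hdelta S HS.
  rewrite (cardB_ext (symdiff S (U_geta g)) (symdiff S U_tilde))
    by (intros i Hi; unfold symdiff; now rewrite U_geta_eq).
  destruct (eta_tilde_classification S HS) as [Hpar HvU].
  pose proof (cardB_le (symdiff S U_tilde)) as Hle.
  set (c := cardB (symdiff S U_tilde)) in *.
  pose proof (Gamma12_parity g (eta_tilde S) Hg) as Hgpar. fold (geta g S) in Hgpar.
  destruct (Z.even (Qf (eta_tilde S))) eqn:E.
  - rewrite Hth, geta_hequiv_iff, HvU by (try apply heven_iff; assumption).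
    assert (Hc : (c mod 4 = 0)%nat) by now apply Hpar.
    pose proof (Nat.div_mod_eq c 4). split; intros; lia.
  - split; [intros _|intros _; apply odd_theta_vanishes; congruence].
    intros Hc. rewrite Hc in Hpar. discriminate (proj2 Hpar eq_refl).
Qed.

Theorem proposition5p6 :
  forall (Zm : nat -> nat -> C) (delta : hchar),
    in_H3 Zm ->
    heven delta ->
    ~ hequiv delta hzero ->
    (forall a : hchar, heven a -> (theta_vanishes a Zm <-> hequiv a delta)) ->
    (exists g, Gamma12 g /\ vanishing_criterion Zm g) /\
    (forall g, Gamma12 g -> hequiv (mv g vU) delta -> vanishing_criterion Zm g).
Proof.
  intros Zm delta HZ Heven Hnz Hth. split.
  - destruct (Gamma12_transitive_even delta Heven Hnz) as [g [Hg Hdelta]].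
    exists g. split; [exact Hg|]. exact (vanishing_criterion_of_image Zm delta g HZ Hth Hg Hdelta).
  - intros g Hg Hdelta. exact (vanishing_criterion_of_image Zm delta g HZ Hth Hg Hdelta).
Qed.
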